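(* Let $r_1,r_2,r_3,L>0$ with $r_2>\max(r_1,r_3)$, let $m(y)=r_1\mathbf 1_{y<0}+r_2\mathbf 1_{0\le y<1}+r_3\mathbf 1_{y\ge1}$, let $c_A>2\sqrt{r_1}$, and let $c\in(2\sqrt{r_1},c_A)$, $\eta>0$, $S>0$, $R>1$, $\gamma>0$. Let $\lambda(c)=\frac12(c-\sqrt{c^2-4r_1})$. Let $\varphi_1^R$ be the principal Dirichlet eigenfunction on $(-R,R)$, i.e. the positive solution in $W^{2,1}((-R,R))$ of $-L^{-2}(\varphi_1^R)''-m\varphi_1^R=\lambda_1^R\varphi_1^R$ in $(-R,R)$ with $\varphi_1^R(\pm R)=0$, normalized by $\varphi_1^R(0)=1$ and extended by $0$ outside $(-R,R)$. For $x_0\in\mathbb{R}$ set $$P(t,x)=e^{-\lambda(c)(x-ct-x_0)}-Se^{-(\lambda(c)+\eta)(x-ct-x_0)},\qquad Q(t,x)=\gamma e^{-\lambda(c)(c_A-c)t}e^{-\frac{c_A(x-c_At)}{2}}\varphi_1^R\Big(\frac{x-c_At}{L}\Big).$$ Then there exists $x_0\in\mathbb{R}$ such that for all $t\ge0$ the equation $P(t,x)=Q(t,x)$ admits an isolated solution $X(t)\in\mathbb{R}$ such that: (a) $\partial_xP(t,X(t))<0$; (b) $\partial_xQ(t,X(t))>0$; (c) $c_At-RL<X(t)<c_At$; (d) $\frac{\ln S}{\eta}<\inf_{t\ge0}X(t)-ct-x_0$. Moreover, (e) $X\in\mathcal C^1([0,+\infty),(-RL,+\infty))$, and (f) $X(t)=c_At+O(1)$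 as $t\to+\infty$. *)

From Stdlib Require Import Reals Lra.
From Coquelicot Require Import Coquelicot.
Open Scope R_scope.

Definition mgrowth (r1 r2 r3 : R) (y : R) : R :=
  if Rlt_dec y 0 then r1 else if Rlt_dec y 1 then r2 else r3.

Definition lam (r1 c : R) : R := (c - sqrt (c ^ 2 - 4 * r1)) / 2.

(* Since m is piecewise constant with jumps only at 0 and 1, a
   W^{2,1}((-R,R)) solution is exactly a C^1 function on (-R,R), continuous up
   to the boundary, twice differentiable away from {0,1}, satisfying the
   equation there. *)
Definition principal_dirichlet_eigenfunction
  (L Rr : R) (m : R -> R) (phi : R -> R) : Prop :=
  exists (lam1 : R) (dphi : R -> R),
    (forall y, (y <= - Rr \/ Rr <= y) -> phi y = 0) /\
    (forall y, continuous phi y) /\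
    (forall y, - Rr < y < Rr -> is_derive phi y (dphi y)) /\
    (forall y, - Rr < y < Rr -> continuous dphi y) /\
    (forall y, - Rr < y < Rr -> y <> 0 -> y <> 1 ->
       exists d2, is_derive dphi y d2 /\
         - / L ^ 2 * d2 - m y * phi y = lam1 * phi y) /\
    (forall y, - Rr < y < Rr -> 0 < phi y) /\
    phi 0 = 1.

Definition Pfun (r1 c S eta x0 : R) (t x : R) : R :=
  exp (- lam r1 c * (x - c * t - x0))
  - S * exp (- (lam r1 c + eta) * (x - c * t - x0)).

Definition Qfun (r1 c cA gamma L : R) (phi : R -> R) (t x : R) : R :=
  gamma * exp (- lam r1 c * (cA - c) * t)
  * exp (- (cA * (x - cA * t)) / 2) * phi ((x - cA * t) / L).

(* In the frame z = x - cA t moving with Q, and with l = lambda(c), the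
   equation P = Q becomes
     psi(z) e^{(l+eta)(z-x0)} - e^{eta(z-x0)} = -S e^{-eta (cA-c) t},
   where psi(z) = gamma e^{-cA z/2} phi(z/L) does not depend on t.  On (-R, 0)
   the eigenfunction solves phi'' = -K phi with K = L^2 (lambda_1 + r1), so its
   energy phi'^2 + K phi^2 is constant; since phi vanishes at -R and is
   positive, this energy is positive and phi' is bounded below near -R.  Hence
   psi increases from 0 near z = -RL, and once x0 is far enough to the left the
   left-hand side is increasing on a window [a, b] and its range there contains
   [-S, 0).  Inverting it gives z(t) in (a, b) and X(t) = cA t + z(t), which is
   C^1 by the inverse function theorem. *)

From Stdlib Require Import Reals Lra Psatz Ranalysis5 ClassicalEpsilon.
From Coquelicot Require Import Coquelicot.
Open Scope R_scope.

Lemma continuous_of_ex_derive (f : R -> R) (x : R) : ex_derive f x -> continuous f x.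
Proof. apply (ex_derive_continuous (K := R_AbsRing) (V := R_NormedModule)). Qed.

Lemma is_derive_continuous (f : R -> R) (x l : R) : is_derive f x l -> continuous f x.
Proof. intro Hd. apply continuous_of_ex_derive. now exists l. Qed.

Lemma exp_le_exp (x y : R) : x <= y -> exp x <= exp y.
Proof. intros [H | ->]; [apply Rlt_le, exp_increasing, H | apply Rle_refl]. Qed.

(* [auto_derive] leaves [Derive (fun x => f x) x] at type [R], which
   [is_derive_unique] does not match when rewriting. *)
Lemma Derive_of_is_derive (f : R -> R) (x l : R) :
  is_derive f x l -> Derive (fun y => f y) x = l.
Proof. apply is_derive_unique. Qed.

Lemma mvt_interval (f df : R -> R) (lo hi y1 y2 : R) :
  (forall y, lo < y < hi -> is_derive f y (df y)) -> lo < y1 -> y1 <= y2 -> y2 < hi ->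
  exists c, y1 <= c <= y2 /\ f y2 - f y1 = df c * (y2 - y1).
Proof.
  intros Hd H1 H12 H2.
  destruct (MVT_gen f y1 y2 df) as [c [Hc Heq]].
  - intros x Hx. rewrite Rmin_left, Rmax_right in Hx by lra. apply Hd; lra.
  - intros x Hx. rewrite Rmin_left, Rmax_right in Hx by lra.
    apply continuity_pt_filterlim, (is_derive_continuous _ _ (df x)), Hd; lra.
  - rewrite Rmin_left, Rmax_right in Hc by lra. now exists c.
Qed.

Lemma is_derive_0_constant (f : R -> R) (lo hi y1 y2 : R) :
  (forall y, lo < y < hi -> is_derive f y 0) -> lo < y1 < hi -> lo < y2 < hi ->
  f y1 = f y2.
Proof.
  intros Hd H1 H2.
  destruct (Rle_lt_dec y1 y2) as [H12 | H21].
  - destruct (mvt_interval f (fun _ => 0) lo hi y1 y2) as [c [_ E]]; auto; lra.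
  - destruct (mvt_interval f (fun _ => 0) lo hi y2 y1) as [c [_ E]]; auto; lra.
Qed.

(* Gronwall: [f e^{-ky}] is nonincreasing. *)
Lemma is_derive_le_mul_lower_bound (f df : R -> R) (k lo hi y m : R) :
  (forall y, lo < y < hi -> is_derive f y (df y)) ->
  (forall y, lo < y < hi -> df y <= k * f y) ->
  lo < y <= m -> m < hi -> f m * exp (k * (y - m)) <= f y.
Proof.
  intros Hd Hle Hy Hm.
  set (g := fun y => f y * exp (- k * y)).
  assert (Hg : forall y, lo < y < hi ->
    is_derive g y ((df y - k * f y) * exp (- k * y))).
  { intros z Hz. unfold g. auto_derive.
    - now exists (df z); apply Hd.
    - rewrite (Derive_of_is_derive _ _ _ (Hd z Hz)). ring. }
  destruct (mvt_interval g _ lo hi y m Hg) as [c [Hc E]]; try lra.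
  assert (Hdc : (df c - k * f c) * exp (- k * c) <= 0).
  { pose proof (Hle c ltac:(lra)). pose proof (exp_pos (- k * c)). nra. }
  assert (Hgm : g m <= g y) by nra.
  assert (Hfy : f y = g y * exp (k * y)).
  { unfold g. rewrite Rmult_assoc, <- exp_plus.
    replace (- k * y + k * y) with 0 by ring. rewrite exp_0. ring. }
  assert (Hfm : f m * exp (k * (y - m)) = g m * exp (k * y)).
  { unfold g. rewrite Rmult_assoc, <- exp_plus. f_equal; f_equal; ring. }
  rewrite Hfy, Hfm. apply Rmult_le_compat_r; [apply Rlt_le, exp_pos | exact Hgm].
Qed.

Lemma continuous_vanishing_right (f : R -> R) (lo ub eps : R) :
  continuous f lo -> f lo = 0 -> lo < ub -> 0 < eps ->
  exists y1, lo < y1 <= ub /\ forall y, lo < y <= y1 -> Rabs (f y) < eps.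
Proof.
  intros Hc H0 Hub He.
  apply continuity_pt_filterlim in Hc.
  destruct (Hc eps He) as [d [Hd Hball]].
  exists (Rmin ub (lo + d / 2)). split.
  - split; [apply Rmin_glb_lt |apply Rmin_l]; lra.
  - intros y Hy. pose proof (Rmin_r ub (lo + d / 2)).
    replace (f y) with (f y - f lo) by (rewrite H0; ring).
    apply Hball. split.
    + split; [exact I | lra].
    + simpl. unfold R_dist. rewrite Rabs_right; lra.
Qed.

Lemma is_derive_isolated_zero (f : R -> R) (x l : R) :
  is_derive f x l -> l <> 0 -> f x = 0 ->
  exists delta, 0 < delta /\ forall y, 0 < Rabs (y - x) < delta -> f y <> 0.
Proof.
  intros Hd Hl Hx. apply is_derive_Reals in Hd.
  destruct (Hd (Rabs l) (Rabs_pos_lt _ Hl)) as [delta Hdelta].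
  exists delta. split; [apply cond_pos |]. intros y [Hy1 Hy2] Hfy.
  assert (Hh : y - x <> 0) by (intro E; rewrite E, Rabs_R0 in Hy1; lra).
  pose proof (Hdelta (y - x) Hh Hy2) as Hq.
  replace (x + (y - x)) with y in Hq by ring. rewrite Hfy, Hx in Hq.
  replace ((0 - 0) / (y - x) - l) with (- l) in Hq by (field; auto).
  rewrite Rabs_Ropp in Hq. lra.
Qed.

Lemma is_derive_right_quotient (f : R -> R) (l : R) :
  is_derive f 0 l -> filterlim (fun h => (f h - f 0) / h) (at_right 0) (locally l).
Proof.
  intro Hd. apply is_derive_Reals in Hd.
  apply filterlim_locally. intro eps.
  destruct (Hd eps (cond_pos eps)) as [d Hdd].
  exists d. intros y Hy Hy0.
  change (Rabs (y - 0) < d) in Hy. rewrite Rminus_0_r in Hy.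
  change (Rabs ((f y - f 0) / y - l) < eps).
  pose proof (Hdd y ltac:(lra) Hy) as Hq. now rewrite Rplus_0_l in Hq.
Qed.

Lemma exp_gt_eventually (A k : R) :
  0 < k -> Rbar_locally p_infty (fun u => A < exp (k * u)).
Proof.
  intro Hk. exists (ln (Rmax A 1) / k). intros u Hu.
  assert (Hmax : 0 < Rmax A 1) by (apply (Rlt_le_trans _ 1); [lra | apply Rmax_r]).
  apply (Rle_lt_trans _ (Rmax A 1)); [apply Rmax_l |].
  rewrite <- (exp_ln (Rmax A 1)) by exact Hmax. apply exp_increasing.
  apply (Rmult_lt_reg_r (/ k)); [now apply Rinv_0_lt_compat |].
  replace (k * u * / k) with u by (field; lra). exact Hu.
Qed.

Lemma continuous_at_right (f : R -> R) (x : R) :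
  continuous f x -> filterlim f (at_right x) (locally (f x)).
Proof. apply filterlim_filter_le_1, filter_le_within. Qed.

Section IncreasingInverse.

Variables (f df : R -> R) (a b : R).

Hypotheses (a_lt_b : a < b)
  (f_derive : forall z, a <= z <= b -> is_derive f z (df z))
  (df_pos : forall z, a <= z <= b -> 0 < df z).

Lemma derive_pos_increasing (x y : R) : a <= x -> x < y -> y <= b -> f x < f y.
Proof.
  intros Hx Hxy Hy. apply (incr_function_le f a b df); simpl; auto.
  intros z Hz1 Hz2. apply df_pos; simpl in *; lra.
Qed.

Lemma derive_pos_inverse_exists :
  exists g : R -> R,
    (forall v, f a <= v <= f b -> a <= g v <= b /\ f (g v) = v) /\
    (forall z, a <= z <= b -> g (f z) = z).
Proof.
  assert (Hmono : forall x y, a <= x -> x <= y -> y <= b -> f x <= f y).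
  { intros x y Hx Hxy Hy. destruct (Req_dec x y) as [-> | Hne]; [lra |].
    apply Rlt_le, derive_pos_increasing; lra. }
  assert (Hsurj : forall v, f a <= v <= f b -> exists z, a <= z <= b /\ f z = v).
  { intros v Hv.
    destruct (Req_dec v (f a)) as [-> | Ha]; [exists a; split; [lra | easy] |].
    destruct (Req_dec v (f b)) as [-> | Hb]; [exists b; split; [lra | easy] |].
    destruct (IVT_interv (fun z => f z - v) a b) as [z [Hz Hfz]]; try lra.
    - intros z Hz. apply continuity_pt_minus; [| apply continuity_pt_const; now intros ? ?].
      apply continuity_pt_filterlim, (is_derive_continuous _ _ (df z)), f_derive, Hz.
    - exists z. split; [exact Hz | lra]. }
  set (g := fun v => epsilon (inhabits a) (fun z => a <= z <= b /\ f z = v)).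
  assert (Hg : forall v, f a <= v <= f b -> a <= g v <= b /\ f (g v) = v).
  { intros v Hv. exact (epsilon_spec _ _ (Hsurj v Hv)). }
  exists g. split; [exact Hg |]. intros z Hz.
  destruct (Hg (f z) ltac:(split; apply Hmono; lra)) as [Hgz Hfgz].
  destruct (Rtotal_order (g (f z)) z) as [Hlt | [Heq | Hgt]]; [| exact Heq |].
  - pose proof (derive_pos_increasing (g (f z)) z ltac:(lra) Hlt ltac:(lra)). lra.
  - pose proof (derive_pos_increasing z (g (f z)) ltac:(lra) Hgt ltac:(lra)). lra.
Qed.

Lemma increasing_inverse :
  exists g : R -> R, forall v, f a < v < f b ->
    a < g v < b /\ f (g v) = v /\ continuous g v /\ is_derive g v (/ df (g v)).
Proof.
  destruct derive_pos_inverse_exists as [g [Hg Hgf]].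
  exists g. intros v Hv.
  destruct (Hg v ltac:(lra)) as [Hgv Hfgv].
  assert (Hgv' : a < g v < b).
  { split.
    - destruct (Req_dec a (g v)) as [E | E]; [rewrite <- E in Hfgv |]; lra.
    - destruct (Req_dec (g v) b) as [E | E]; [rewrite E in Hfgv |]; lra. }
  assert (Hgc : continuity_pt g v).
  { apply (continuity_pt_recip_interv f g a b a_lt_b derive_pos_increasing); [| | | exact Hv].
    - intros x Hx1 Hx2. apply (Hg x). lra.
    - intros x Hx1 Hx2. apply (Hg x). lra.
    - intros z Hz. apply continuity_pt_filterlim, (is_derive_continuous _ _ (df z)), f_derive, Hz. }
  assert (Prf : forall y, g (f a) <= y <= g (f b) -> derivable_pt f y).
  { intros y Hy. rewrite !Hgf in Hy by lra.
    exists (df y). apply is_derive_Reals, f_derive, Hy. }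
  assert (Hgv_incr : g (f a) <= g v <= g (f b)) by (rewrite !Hgf; lra).
  assert (Hdf : derive_pt f (g v) (Prf (g v) Hgv_incr) = df (g v)).
  { apply derive_pt_eq_0, is_derive_Reals, f_derive. lra. }
  split; [exact Hgv' |]. split; [exact Hfgv |]. split.
  - now apply continuity_pt_filterlim.
  - apply is_derive_Reals.
    assert (Hlim := derivable_pt_lim_recip_interv f g (f a) (f b) v Prf Hgc
                      ltac:(lra) Hv Hgv_incr).
    rewrite Hdf in Hlim. unfold Rdiv in Hlim. rewrite Rmult_1_l in Hlim.
    apply Hlim.
    + intros x Hx. apply (Hg x Hx).
    + pose proof (df_pos (g v) ltac:(lra)). lra.
Qed.

End IncreasingInverse.

Section DirichletBoundary.

Variables (K lo hi : R) (phi dphi : R -> R).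

Hypotheses (lo_lt_hi : lo < hi) (phi_lo : phi lo = 0) (phi_cont_lo : continuous phi lo)
  (phi_derive : forall y, lo < y < hi -> is_derive phi y (dphi y))
  (dphi_derive : forall y, lo < y < hi -> is_derive dphi y (- K * phi y))
  (phi_pos : forall y, lo < y < hi -> 0 < phi y).

Let mid := (lo + hi) / 2.
Let energy y := dphi y ^ 2 + K * phi y ^ 2.

Lemma phi_small_near_lo (eps ub : R) :
  0 < eps -> lo < ub -> exists y1, lo < y1 <= ub /\ forall y, lo < y <= y1 -> phi y < eps.
Proof.
  intros He Hub.
  destruct (continuous_vanishing_right phi lo ub eps) as [y1 [Hy1 Hsmall]]; auto.
  exists y1. split; [exact Hy1 |]. intros y Hy.
  pose proof (Rle_abs (phi y)). pose proof (Hsmall y Hy). lra.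
Qed.

Lemma energy_constant y : lo < y < hi -> energy y = energy mid.
Proof.
  intro Hy. apply (is_derive_0_constant energy lo hi); [| exact Hy | unfold mid; lra].
  intros z Hz. unfold energy. auto_derive.
  - split; [now exists (- K * phi z); apply dphi_derive |].
    split; [now exists (dphi z); apply phi_derive | easy].
  - rewrite (Derive_of_is_derive _ _ _ (dphi_derive z Hz)),
      (Derive_of_is_derive _ _ _ (phi_derive z Hz)). ring.
Qed.

(* If the energy were nonpositive, [|phi'| <= sqrt|K| phi] and Gronwall would
   keep [phi] away from [0] near [lo]. *)
Lemma energy_pos : 0 < energy mid.
Proof.
  apply Rnot_le_lt. intro Hle.
  set (k := sqrt (Rabs K)).
  assert (Hk : 0 <= k) by apply sqrt_pos.
  assert (Hkk : k * k = Rabs K) by (apply sqrt_sqrt, Rabs_pos).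
  assert (Hslope : forall y, lo < y < hi -> dphi y <= k * phi y).
  { intros y Hy.
    assert (Hy0 : dphi y ^ 2 + K * phi y ^ 2 <= 0).
    { change (energy y <= 0). now rewrite energy_constant. }
    assert (Hsq : dphi y ^ 2 <= (k * phi y) ^ 2).
    { pose proof (Rle_abs (- K)). rewrite Rabs_Ropp in *.
      replace ((k * phi y) ^ 2) with (Rabs K * phi y ^ 2) by (rewrite <- Hkk; ring).
      pose proof (pow2_ge_0 (phi y)). nra. }
    pose proof (phi_pos y Hy).
    apply Rnot_lt_le. intro Hgt. assert (0 <= k * phi y) by nra. nra. }
  assert (Hm : lo < mid < hi) by (unfold mid; lra).
  set (c0 := phi mid * exp (k * (lo - mid))).
  assert (Hc0 : 0 < c0) by (apply Rmult_lt_0_compat; [apply phi_pos, Hm | apply exp_pos]).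
  destruct (phi_small_near_lo c0 mid Hc0 ltac:(lra)) as [y [Hy Hsmall]].
  pose proof (is_derive_le_mul_lower_bound phi dphi k lo hi y mid
                phi_derive Hslope ltac:(lra) ltac:(lra)) as Hlow.
  assert (exp (k * (lo - mid)) <= exp (k * (y - mid))).
  { apply exp_le_exp. apply Rmult_le_compat_l; lra. }
  assert (c0 <= phi mid * exp (k * (y - mid))).
  { apply Rmult_le_compat_l; [apply Rlt_le, phi_pos, Hm | assumption]. }
  pose proof (Hsmall y ltac:(lra)). lra.
Qed.

(* [phi] grows away from its zero at [lo], so a nonvanishing [phi'] cannot be
   negative there: otherwise MVT gives a point where [phi' > 0] and IVT a zero. *)
Lemma dphi_pos_of_neq0 y1 :
  y1 < hi -> (forall y, lo < y <= y1 -> dphi y <> 0) -> forall y, lo < y <= y1 -> 0 < dphi y.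
Proof.
  intros Hy1 Hneq y Hy.
  apply Rnot_le_lt. intro Hle.
  assert (Hneg : dphi y < 0) by (pose proof (Hneq y Hy); lra).
  assert (Hpy : 0 < phi y) by (apply phi_pos; lra).
  destruct (phi_small_near_lo (phi y) ((lo + y) / 2) Hpy ltac:(lra)) as [y0 [Hy0 Hsmall]].
  pose proof (Hsmall y0 ltac:(lra)).
  destruct (mvt_interval phi dphi lo hi y0 y phi_derive) as [c [Hc E]]; try lra.
  assert (Hcpos : 0 < dphi c).
  { apply Rnot_le_lt. intro. assert (0 < y - y0) by lra. nra. }
  assert (Hcy : c < y) by (destruct (Req_dec c y) as [-> | ]; lra).
  destruct (IVT_interv (fun x => - dphi x) c y) as [z [Hz Hz0]]; try lra.
  - intros x Hx. apply continuity_pt_opp, continuity_pt_filterlim.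
    apply (is_derive_continuous _ _ (- K * phi x)), dphi_derive. lra.
  - apply (Hneq z); lra.
Qed.

Lemma dphi_lower_bound :
  exists y1 m, lo < y1 < hi /\ 0 < m /\ forall y, lo < y <= y1 -> m <= dphi y.
Proof.
  pose proof energy_pos as HE.
  set (E0 := energy mid) in *.
  set (eps := Rmin 1 (E0 / (2 * (Rabs K + 1)))).
  pose proof (Rabs_pos K).
  assert (Heps : 0 < eps) by (apply Rmin_pos; [lra | apply Rdiv_lt_0_compat; lra]).
  assert (Heps1 : eps <= 1) by apply Rmin_l.
  assert (HepsK : Rabs K * eps < E0 / 2).
  { assert (eps <= E0 / (2 * (Rabs K + 1))) by apply Rmin_r.
    assert (Rabs K * (E0 / (2 * (Rabs K + 1))) < E0 / 2).
    { apply (Rmult_lt_reg_r (2 * (Rabs K + 1))); [lra |].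
      field_simplify; lra. }
    nra. }
  destruct (phi_small_near_lo eps mid Heps ltac:(unfold mid; lra)) as [y1 [Hy1 Hsmall]].
  assert (Hbig : forall y, lo < y <= y1 -> E0 / 2 < dphi y ^ 2).
  { intros y Hy.
    assert (Hyin : lo < y < hi) by (unfold mid in Hy1; lra).
    assert (E : dphi y ^ 2 + K * phi y ^ 2 = E0) by exact (energy_constant y Hyin).
    pose proof (phi_pos y Hyin). pose proof (Hsmall y Hy).
    assert (Hsq : phi y ^ 2 <= eps) by nra.
    assert (K * phi y ^ 2 <= Rabs K * phi y ^ 2)
      by (apply Rmult_le_compat_r; [apply pow2_ge_0 | apply Rle_abs]).
    assert (Rabs K * phi y ^ 2 <= Rabs K * eps) by (apply Rmult_le_compat_l; lra).
    lra. }
  assert (Hpos : forall y, lo < y <= y1 -> 0 < dphi y).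
  { apply dphi_pos_of_neq0; [unfold mid in Hy1; lra |].
    intros y Hy E. pose proof (Hbig y Hy). rewrite E in *. simpl in *. lra. }
  exists y1, (sqrt (E0 / 2)). split; [unfold mid in Hy1; lra |].
  split; [apply sqrt_lt_R0; lra |].
  intros y Hy. pose proof (Hbig y Hy). pose proof (Hpos y Hy).
  rewrite <- (sqrt_pow2 (dphi y)) by lra.
  apply sqrt_le_1_alt. lra.
Qed.

Lemma dphi_sub_phi_lower_bound kap :
  exists y1 m, lo < y1 < hi /\ 0 < m /\
    forall y, lo < y <= y1 -> m <= dphi y - kap * phi y.
Proof.
  destruct dphi_lower_bound as [y1 [m [Hy1 [Hm Hlow]]]].
  pose proof (Rabs_pos kap).
  set (eps := m / (2 * (Rabs kap + 1))).
  assert (Heps : 0 < eps) by (apply Rdiv_lt_0_compat; lra).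
  assert (Hkeps : Rabs kap * eps <= m / 2).
  { unfold eps. apply (Rmult_le_reg_r (2 * (Rabs kap + 1))); [lra |].
    field_simplify; lra. }
  destruct (phi_small_near_lo eps y1 Heps ltac:(lra)) as [y2 [Hy2 Hsmall]].
  exists y2, (m / 2). split; [lra |]. split; [lra |].
  intros y Hy. pose proof (Hlow y ltac:(lra)). pose proof (Hsmall y Hy).
  pose proof (phi_pos y ltac:(lra)). pose proof (Rle_abs kap).
  assert (kap * phi y <= Rabs kap * eps) by nra.
  lra.
Qed.

End DirichletBoundary.

Lemma lam_pos (r1 c : R) : 0 < r1 -> 2 * sqrt r1 < c -> 0 < lam r1 c.
Proof.
  intros Hr1 Hc. pose proof (sqrt_pos r1).
  unfold lam. apply Rdiv_lt_0_compat; [| lra].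
  destruct (Rlt_or_le (c ^ 2 - 4 * r1) 0) as [Hneg | Hnn].
  - rewrite sqrt_neg_0; lra.
  - assert (Hlt : sqrt (c ^ 2 - 4 * r1) < sqrt (c ^ 2)) by (apply sqrt_lt_1_alt; lra).
    rewrite sqrt_pow2 in Hlt by lra. lra.
Qed.

Lemma mgrowth_left (r1 r2 r3 y : R) : y < 0 -> mgrowth r1 r2 r3 y = r1.
Proof. intro Hy. unfold mgrowth. now destruct (Rlt_dec y 0). Qed.

Lemma eigen_ode_left (L r1 r2 r3 lam1 Rr : R) (phi dphi : R -> R) :
  0 < L ->
  (forall y, - Rr < y < Rr -> y <> 0 -> y <> 1 ->
     exists d2, is_derive dphi y d2 /\ - / L ^ 2 * d2 - mgrowth r1 r2 r3 y * phi y = lam1 * phi y) ->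
  forall y, - Rr < y < 0 -> is_derive dphi y (- (L ^ 2 * (lam1 + r1)) * phi y).
Proof.
  intros HL Hode y Hy.
  destruct (Hode y ltac:(lra) ltac:(lra) ltac:(lra)) as [d2 [Hd2 Heq]].
  rewrite mgrowth_left in Heq by lra.
  assert (E : - (L ^ 2 * (lam1 + r1)) * phi y = d2).
  { transitivity (L ^ 2 * (/ L ^ 2 * d2)); [| field; lra].
    replace (/ L ^ 2 * d2) with (- ((lam1 + r1) * phi y)) by lra. ring. }
  now rewrite E.
Qed.

Lemma principal_eigenfunction_left_slope (L Rr r1 r2 r3 kap : R) (phi : R -> R) :
  0 < L -> 0 < Rr -> principal_dirichlet_eigenfunction L Rr (mgrowth r1 r2 r3) phi ->
  exists dphi yb m0,
    phi (- Rr) = 0 /\ (forall y, continuous phi y) /\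
    (forall y, - Rr < y < Rr -> is_derive phi y (dphi y)) /\
    (forall y, - Rr < y < Rr -> continuous dphi y) /\
    (forall y, - Rr < y < Rr -> 0 < phi y) /\
    - Rr < yb < 0 /\ 0 < m0 /\
    (forall y, - Rr < y <= yb -> m0 <= dphi y - kap * phi y).
Proof.
  intros HL HRr [lam1 [dphi [phi_out [phi_cont [phi_derive [dphi_cont [phi_ode [phi_pos _]]]]]]]].
  assert (phi_left : phi (- Rr) = 0) by (apply phi_out; lra).
  destruct (dphi_sub_phi_lower_bound (L ^ 2 * (lam1 + r1)) (- Rr) 0 phi dphi
             ltac:(lra) phi_left (phi_cont _)
             (fun y Hy => phi_derive y ltac:(lra))
             (eigen_ode_left L r1 r2 r3 lam1 Rr phi dphi HL phi_ode)
             (fun y Hy => phi_pos y ltac:(lra)) kap)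
    as [yb [m0 [yb_range [m0_pos phi_slope]]]].
  exists dphi, yb, m0. tauto.
Qed.

Section TravellingFront.

Variables (r1 c cA L gamma eta S : R) (phi dphi : R -> R).

Let l := lam r1 c.

Definition psi (z : R) : R := gamma * exp (- (cA * z) / 2) * phi (z / L).

Definition dpsi (z : R) : R :=
  gamma * exp (- (cA * z) / 2) * (dphi (z / L) / L - cA / 2 * phi (z / L)).

Definition balance (x0 z : R) : R :=
  psi z * exp ((l + eta) * (z - x0)) - exp (eta * (z - x0)).

Definition dbalance (x0 z : R) : R :=
  (dpsi z + (l + eta) * psi z) * exp ((l + eta) * (z - x0)) - eta * exp (eta * (z - x0)).

Lemma Qfun_moving_frame (t z : R) :
  Qfun r1 c cA gamma L phi t (cA * t + z) = exp (- l * (cA - c) * t) * psi z.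
Proof.
  unfold Qfun, psi. replace (cA * t + z - cA * t) with z by ring. fold l. ring.
Qed.

Lemma Pfun_eq_Qfun_of_balance (x0 t z : R) :
  balance x0 z = - S * exp (- eta * ((cA - c) * t)) ->
  Pfun r1 c S eta x0 t (cA * t + z) = Qfun r1 c cA gamma L phi t (cA * t + z).
Proof.
  unfold balance. intro Hbal.
  rewrite Qfun_moving_frame. unfold Pfun. fold l.
  set (u := z - x0) in *. set (s := (cA - c) * t) in *.
  assert (Hpsi : psi z = (exp (eta * u) - S * exp (- eta * s)) * exp (- (l + eta) * u)).
  { rewrite <- (Rmult_1_r (psi z)).
    replace 1 with (exp ((l + eta) * u) * exp (- (l + eta) * u))
      by (rewrite <- exp_plus; replace ((l + eta) * u + - (l + eta) * u) with 0 by ring;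
          apply exp_0).
    rewrite <- Rmult_assoc. f_equal. lra. }
  rewrite Hpsi.
  replace (cA * t + z - c * t - x0) with (u + s) by (unfold u, s; ring).
  replace (- l * (cA - c) * t) with (- l * s) by (unfold s; ring).
  assert (E1 : exp (- l * (u + s)) = exp (- l * s) * exp (eta * u) * exp (- (l + eta) * u))
    by (rewrite <- !exp_plus; f_equal; ring).
  assert (E2 : exp (- (l + eta) * (u + s))
               = exp (- l * s) * exp (- eta * s) * exp (- (l + eta) * u))
    by (rewrite <- !exp_plus; f_equal; ring).
  rewrite E1, E2. ring.
Qed.

Lemma psi_derive (z : R) :
  L <> 0 -> is_derive phi (z / L) (dphi (z / L)) -> is_derive psi z (dpsi z).
Proof.
  intros HL Hd. unfold psi, dpsi, Rdiv in *. auto_derive.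
  - now exists (dphi (z * / L)).
  - rewrite (Derive_of_is_derive _ _ _ Hd). field. exact HL.
Qed.

Lemma continuous_scaled (f : R -> R) (z : R) :
  continuous f (z / L) -> continuous (fun y => f (y / L)) z.
Proof.
  intro Hf. apply (continuous_comp (fun y => y / L) f); [| exact Hf].
  apply continuous_of_ex_derive. now auto_derive.
Qed.

Lemma continuous_exp_factor (z : R) : continuous (fun y => gamma * exp (- (cA * y) / 2)) z.
Proof.
  apply continuous_of_ex_derive. now auto_derive.
Qed.

Lemma psi_continuous (z : R) : continuous phi (z / L) -> continuous psi z.
Proof.
  intro Hphi. apply (continuous_mult (fun y => gamma * exp (- (cA * y) / 2))).
  - apply continuous_exp_factor.
  - now apply continuous_scaled.
Qed.

Lemma dpsi_continuous (z : R) :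
  continuous phi (z / L) -> continuous dphi (z / L) -> continuous dpsi z.
Proof.
  intros Hphi Hdphi. apply (continuous_mult (fun y => gamma * exp (- (cA * y) / 2))).
  - apply continuous_exp_factor.
  - apply (continuous_minus (fun y => dphi (y / L) / L)).
    + apply (continuous_mult (fun y => dphi (y / L)) (fun _ => / L)).
      * now apply continuous_scaled.
      * apply continuous_const.
    + apply (continuous_mult (fun _ => cA / 2)); [apply continuous_const |].
      now apply continuous_scaled.
Qed.

Lemma balance_derive (x0 z : R) :
  is_derive psi z (dpsi z) -> is_derive (balance x0) z (dbalance x0 z).
Proof.
  intro Hd. unfold balance, dbalance. auto_derive.
  - now exists (dpsi z).
  - rewrite (Derive_of_is_derive psi z (dpsi z) Hd). unfold Rminus. ring.
Qed.

Lemma dbalance_continuous (x0 z : R) :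
  continuous psi z -> continuous dpsi z -> continuous (dbalance x0) z.
Proof.
  intros Hpsi Hdpsi. unfold dbalance.
  apply (continuous_minus (fun z => (dpsi z + (l + eta) * psi z) * exp ((l + eta) * (z - x0)))).
  - apply (continuous_mult (fun z => dpsi z + (l + eta) * psi z)).
    + apply (continuous_plus dpsi); [exact Hdpsi |].
      apply (continuous_mult (fun _ => l + eta)); [apply continuous_const | exact Hpsi].
    + apply continuous_of_ex_derive. now auto_derive.
  - apply continuous_of_ex_derive. now auto_derive.
Qed.

Lemma Pfun_derive (x0 t x : R) :
  is_derive (Pfun r1 c S eta x0 t) x
    (- l * exp (- l * (x - c * t - x0)) + S * (l + eta) * exp (- (l + eta) * (x - c * t - x0))).
Proof. unfold Pfun. fold l. auto_derive; [easy | unfold Rminus; ring]. Qed.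

Lemma Pfun_slope_neg (w : R) :
  0 < l -> S * (l + eta) / l < exp (eta * w) ->
  - l * exp (- l * w) + S * (l + eta) * exp (- (l + eta) * w) < 0.
Proof.
  intros Hl Hw.
  assert (E : exp (- l * w) = exp (eta * w) * exp (- (l + eta) * w))
    by (rewrite <- exp_plus; f_equal; ring).
  rewrite E.
  assert (S * (l + eta) < l * exp (eta * w)).
  { apply (Rmult_lt_reg_r (/ l)); [now apply Rinv_0_lt_compat |].
    replace (l * exp (eta * w) * / l) with (exp (eta * w)) by (field; lra). exact Hw. }
  pose proof (exp_pos (- (l + eta) * w)). nra.
Qed.

Lemma Qfun_derive (t x : R) :
  is_derive psi (x - cA * t) (dpsi (x - cA * t)) ->
  is_derive (Qfun r1 c cA gamma L phi t) x (exp (- l * (cA - c) * t) * dpsi (x - cA * t)).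
Proof.
  intro Hd.
  apply (is_derive_ext (fun x => exp (- l * (cA - c) * t) * psi (x - cA * t))).
  { intro y. rewrite <- Qfun_moving_frame. f_equal. ring. }
  auto_derive.
  - now exists (dpsi (x - cA * t)).
  - unfold Rminus in *. rewrite (Derive_of_is_derive psi _ _ Hd). ring.
Qed.

Variables (Rr yb m0 : R).

Hypotheses (l_pos : 0 < l) (eta_pos : 0 < eta) (S_pos : 0 < S) (gamma_pos : 0 < gamma)
  (L_pos : 0 < L) (cA_pos : 0 < cA)
  (phi_out : phi (- Rr) = 0)
  (phi_cont : forall y, continuous phi y)
  (phi_derive : forall y, - Rr < y < Rr -> is_derive phi y (dphi y))
  (dphi_cont : forall y, - Rr < y < Rr -> continuous dphi y)
  (phi_pos : forall y, - Rr < y < Rr -> 0 < phi y)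
  (yb_range : - Rr < yb < 0) (m0_pos : 0 < m0)
  (phi_slope : forall y, - Rr < y <= yb -> m0 <= dphi y - cA * L / 2 * phi y).

Lemma scaled_range (z : R) : - (Rr * L) < z < Rr * L -> - Rr < z / L < Rr.
Proof.
  intros [H1 H2]. split; apply (Rmult_lt_reg_r L); try exact L_pos;
    unfold Rdiv; rewrite Rmult_assoc, Rinv_l, Rmult_1_r by lra; lra.
Qed.

Lemma psi_derive_in (z : R) : - (Rr * L) < z < Rr * L -> is_derive psi z (dpsi z).
Proof. intro Hz. apply psi_derive; [lra |]. now apply phi_derive, scaled_range. Qed.

Lemma dpsi_continuous_in (z : R) : - (Rr * L) < z < Rr * L -> continuous dpsi z.
Proof. intro Hz. apply dpsi_continuous; [apply phi_cont |]. now apply dphi_cont, scaled_range. Qed.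

Lemma psi_pos_in (z : R) : - (Rr * L) < z < Rr * L -> 0 < psi z.
Proof.
  intro Hz. unfold psi. pose proof (exp_pos (- (cA * z) / 2)).
  pose proof (phi_pos _ (scaled_range z Hz)). apply Rmult_lt_0_compat; nra.
Qed.

Lemma psi_left_end : psi (- (Rr * L)) = 0.
Proof.
  unfold psi. replace (- (Rr * L) / L) with (- Rr) by (field; lra).
  rewrite phi_out. ring.
Qed.

Lemma dpsi_lower_bound (z : R) : - (Rr * L) < z <= yb * L -> gamma * m0 / L <= dpsi z.
Proof.
  intro Hz.
  assert (Hz' : - (Rr * L) < z < Rr * L) by nra.
  assert (Hzb : z / L <= yb).
  { apply (Rmult_le_reg_r L); [exact L_pos |].
    unfold Rdiv. rewrite Rmult_assoc, Rinv_l, Rmult_1_r by lra. lra. }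
  pose proof (phi_slope (z / L) ltac:(pose proof (scaled_range z Hz'); lra)) as Hk.
  assert (E : dpsi z = gamma * exp (- (cA * z) / 2) * ((dphi (z / L) - cA * L / 2 * phi (z / L)) / L))
    by (unfold dpsi; field; lra).
  assert (He : 1 <= exp (- (cA * z) / 2)).
  { assert (yb * L < 0) by nra. rewrite <- exp_0. apply exp_le_exp. nra. }
  assert (Hq : m0 / L <= (dphi (z / L) - cA * L / 2 * phi (z / L)) / L).
  { unfold Rdiv. apply Rmult_le_compat_r; [apply Rlt_le, Rinv_0_lt_compat |]; lra. }
  assert (0 < m0 / L) by (apply Rdiv_lt_0_compat; lra).
  rewrite E. replace (gamma * m0 / L) with (gamma * 1 * (m0 / L)) by (field; lra).
  apply Rmult_le_compat; nra.
Qed.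

Lemma dbalance_pos_of_far (x0 z : R) :
  - (Rr * L) < z <= yb * L -> eta / (gamma * m0 / L) < exp (l * (z - x0)) ->
  0 < dbalance x0 z.
Proof.
  intros Hz Hfar.
  set (m1 := gamma * m0 / L) in *.
  assert (Hm1 : 0 < m1) by (unfold m1; apply Rdiv_lt_0_compat; nra).
  assert (Hdz : m1 <= dpsi z) by (apply dpsi_lower_bound, Hz).
  pose proof (psi_pos_in z ltac:(nra)).
  assert (Heta : eta < m1 * exp (l * (z - x0))).
  { apply (Rmult_lt_reg_r (/ m1)); [now apply Rinv_0_lt_compat |].
    replace (m1 * exp (l * (z - x0)) * / m1) with (exp (l * (z - x0))) by (field; lra).
    exact Hfar. }
  assert (m1 * exp (l * (z - x0)) <= (dpsi z + (l + eta) * psi z) * exp (l * (z - x0)))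
    by (apply Rmult_le_compat_r; [apply Rlt_le, exp_pos | nra]).
  assert (eta * exp (eta * (z - x0))
          < (dpsi z + (l + eta) * psi z) * exp (l * (z - x0)) * exp (eta * (z - x0)))
    by (apply Rmult_lt_compat_r; [apply exp_pos | lra]).
  unfold dbalance.
  replace (exp ((l + eta) * (z - x0))) with (exp (l * (z - x0)) * exp (eta * (z - x0)))
    by (rewrite <- exp_plus; f_equal; ring).
  lra.
Qed.

Lemma balance_pos_of_far (x0 z : R) :
  - (Rr * L) < z < Rr * L -> / psi z < exp (l * (z - x0)) -> 0 < balance x0 z.
Proof.
  intros Hz Hfar. pose proof (psi_pos_in z Hz).
  assert (1 < psi z * exp (l * (z - x0))).
  { apply (Rmult_lt_reg_l (/ psi z)); [now apply Rinv_0_lt_compat |].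
    rewrite <- Rmult_assoc, Rinv_l, Rmult_1_l, Rmult_1_r by lra. exact Hfar. }
  assert (1 * exp (eta * (z - x0)) < psi z * exp (l * (z - x0)) * exp (eta * (z - x0)))
    by (apply Rmult_lt_compat_r; [apply exp_pos | lra]).
  unfold balance.
  replace (exp ((l + eta) * (z - x0))) with (exp (l * (z - x0)) * exp (eta * (z - x0)))
    by (rewrite <- exp_plus; f_equal; ring).
  lra.
Qed.

(* All the exponential conditions hold beyond some [M]; [x0] puts the whole
   window [(-RL, b]] beyond [M] in the variable [z - x0]. *)
Lemma balance_window :
  exists x0 a, - (Rr * L) < a < yb * L /\
    (forall z, a <= z <= yb * L -> 0 < dbalance x0 z) /\
    balance x0 a < - S /\ 0 < balance x0 (yb * L) /\
    (forall w, a - x0 <= w -> S * (l + eta) / l < exp (eta * w)) /\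
    ln S / eta < a - x0.
Proof.
  set (b := yb * L).
  assert (Hb : - (Rr * L) < b < 0) by (unfold b; split; nra).
  assert (Hln : Rbar_locally p_infty (fun u => ln S / eta < u)) by now exists (ln S / eta).
  destruct (filter_and _ _ (exp_gt_eventually (2 * S) eta eta_pos)
             (filter_and _ _ (exp_gt_eventually (S * (l + eta) / l) eta eta_pos)
             (filter_and _ _ (exp_gt_eventually (eta / (gamma * m0 / L)) l l_pos)
             (filter_and _ _ (exp_gt_eventually (/ psi b) l l_pos) Hln))))
    as [M HM].
  set (x0 := - (Rr * L) - M).
  assert (Hu : forall z, - (Rr * L) < z -> M < z - x0) by (intros z Hz; unfold x0; lra).
  set (E := exp ((l + eta) * (b - x0))).
  assert (HE : 0 < E) by apply exp_pos.
  destruct (continuous_vanishing_right psi (- (Rr * L)) ((- (Rr * L) + b) / 2) (S / E))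
    as [a [Ha Hsmall]].
  { apply psi_continuous, phi_cont. }
  { apply psi_left_end. }
  { lra. }
  { now apply Rdiv_lt_0_compat. }
  assert (HMa : M < a - x0) by (apply Hu; lra).
  destruct (HM (a - x0) HMa) as [H2S [_ [_ [_ HlnS]]]].
  exists x0, a.
  split; [lra |]. split; [| split; [| split; [| split]]].
  - intros z Hz. apply dbalance_pos_of_far; [unfold b in *; lra |].
    apply (HM (z - x0) (Hu z ltac:(lra))).
  - unfold balance.
    assert (Hpa : 0 < psi a) by (apply psi_pos_in; lra).
    pose proof (Hsmall a ltac:(lra)) as Hpa_small. rewrite Rabs_right in Hpa_small by lra.
    assert (exp ((l + eta) * (a - x0)) <= E) by (apply exp_le_exp; nra).
    assert (psi a * exp ((l + eta) * (a - x0)) < S).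
    { apply (Rle_lt_trans _ (psi a * E)); [apply Rmult_le_compat_l; lra |].
      replace S with (S / E * E) by (field; lra). apply Rmult_lt_compat_r; lra. }
    lra.
  - apply balance_pos_of_far; [nra |]. apply (HM (b - x0) (Hu b ltac:(lra))).
  - intros w Hw. apply (HM w). lra.
  - exact HlnS.
Qed.

Variables (x0 a : R) (g : R -> R).

Hypotheses (c_lt_cA : c < cA)
  (a_range : - (Rr * L) < a < yb * L)
  (dbalance_pos : forall z, a <= z <= yb * L -> 0 < dbalance x0 z)
  (balance_a : balance x0 a < - S) (balance_b : 0 < balance x0 (yb * L))
  (far_slope : forall w, a - x0 <= w -> S * (l + eta) / l < exp (eta * w))
  (lnS_lt : ln S / eta < a - x0)
  (g_spec : forall v, balance x0 a < v < balance x0 (yb * L) ->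
     a < g v < yb * L /\ balance x0 (g v) = v /\ continuous g v /\
     is_derive g v (/ dbalance x0 (g v))).

Definition target (t : R) : R := - S * exp (- eta * ((cA - c) * t)).

Definition front (t : R) : R := cA * t + g (target t).

Definition dfront (t : R) : R :=
  cA + S * eta * (cA - c) * exp (- eta * ((cA - c) * t)) / dbalance x0 (g (target t)).

Lemma target_range (t : R) : 0 <= t -> balance x0 a < target t < balance x0 (yb * L).
Proof.
  intro Ht. unfold target.
  assert (Hexp : exp (- eta * ((cA - c) * t)) <= 1).
  { assert (0 <= (cA - c) * t) by nra. rewrite <- exp_0. apply exp_le_exp. nra. }
  pose proof (exp_pos (- eta * ((cA - c) * t))). nra.
Qed.

Lemma front_offset (t : R) : 0 <= t -> a < front t - cA * t < yb * L.
Proof.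
  intro Ht. unfold front. replace (cA * t + g (target t) - cA * t) with (g (target t)) by ring.
  apply (g_spec _ (target_range t Ht)).
Qed.

Lemma front_solves (t : R) :
  0 <= t -> Pfun r1 c S eta x0 t (front t) = Qfun r1 c cA gamma L phi t (front t).
Proof.
  intro Ht. apply Pfun_eq_Qfun_of_balance.
  apply (g_spec _ (target_range t Ht)).
Qed.

Lemma front_Pfun_slope (t : R) :
  0 <= t -> exists dP, is_derive (Pfun r1 c S eta x0 t) (front t) dP /\ dP < 0.
Proof.
  intro Ht. eexists. split; [apply Pfun_derive |].
  apply Pfun_slope_neg; [exact l_pos |]. apply far_slope.
  pose proof (front_offset t Ht). nra.
Qed.

Lemma front_Qfun_slope (t : R) :
  0 <= t -> exists dQ, is_derive (Qfun r1 c cA gamma L phi t) (front t) dQ /\ 0 < dQ.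
Proof.
  intro Ht. pose proof (front_offset t Ht) as Hz.
  assert (Hb : yb * L < 0) by nra.
  eexists. split.
  - apply Qfun_derive, psi_derive_in. nra.
  - apply Rmult_lt_0_compat; [apply exp_pos |].
    apply (Rlt_le_trans _ (gamma * m0 / L)); [apply Rdiv_lt_0_compat; nra |].
    apply dpsi_lower_bound. lra.
Qed.

Lemma front_isolated (t : R) :
  0 <= t -> exists delta, 0 < delta /\ forall x, 0 < Rabs (x - front t) < delta ->
    Pfun r1 c S eta x0 t x <> Qfun r1 c cA gamma L phi t x.
Proof.
  intro Ht.
  destruct (front_Pfun_slope t Ht) as [dP [HdP HdPneg]].
  destruct (front_Qfun_slope t Ht) as [dQ [HdQ HdQpos]].
  destruct (is_derive_isolated_zero
              (fun x => Pfun r1 c S eta x0 t x - Qfun r1 c cA gamma L phi t x) (front t) (dP - dQ))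
    as [delta [Hdelta Hiso]].
  - now apply (is_derive_minus (Pfun r1 c S eta x0 t) (Qfun r1 c cA gamma L phi t)).
  - lra.
  - rewrite front_solves by exact Ht. ring.
  - exists delta. split; [exact Hdelta |]. intros x Hx Heq. apply (Hiso x Hx). rewrite Heq. ring.
Qed.

Lemma front_glb :
  Rbar_lt (ln S / eta) (Glb_Rbar (fun y => exists t, 0 <= t /\ y = front t - c * t - x0)).
Proof.
  apply (Rbar_lt_le_trans _ (a - x0)); [exact lnS_lt |].
  apply Glb_Rbar_correct. intros y [t [Ht ->]]. simpl.
  pose proof (front_offset t Ht). nra.
Qed.

Lemma front_derive (t : R) : 0 <= t -> is_derive front t (dfront t).
Proof.
  intro Ht. destruct (g_spec _ (target_range t Ht)) as [Hz [_ [_ Hg]]].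
  pose proof (dbalance_pos (g (target t)) ltac:(lra)) as Hpos.
  unfold front, dfront. unfold target in *. auto_derive.
  - now exists (/ dbalance x0 (g (- S * exp (- eta * ((cA - c) * t))))).
  - rewrite (Derive_of_is_derive g _ _ Hg). field. lra.
Qed.

Lemma dfront_continuous (t : R) : 0 <= t -> continuous dfront t.
Proof.
  intro Ht. destruct (g_spec _ (target_range t Ht)) as [Hz [_ [Hgc _]]].
  pose proof (dbalance_pos (g (target t)) ltac:(lra)) as Hpos.
  assert (Hden : continuous (fun s => dbalance x0 (g (target s))) t).
  { apply (continuous_comp (fun s => g (target s)) (dbalance x0)).
    - apply (continuous_comp target g); [| exact Hgc].
      apply continuous_of_ex_derive. unfold target. now auto_derive.
    - apply dbalance_continuous; [apply psi_continuous, phi_cont |].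
      apply dpsi_continuous_in. nra. }
  unfold dfront, Rdiv. apply (continuous_plus (fun _ => cA)); [apply continuous_const |].
  apply (continuous_mult (fun s => S * eta * (cA - c) * exp (- eta * ((cA - c) * s)))).
  - apply continuous_of_ex_derive. now auto_derive.
  - apply (continuous_comp (fun s => dbalance x0 (g (target s))) Rinv); [exact Hden |].
    apply continuous_of_ex_derive. auto_derive. lra.
Qed.

Lemma front_C1 :
  exists dX : R -> R,
    (forall t, 0 < t -> is_derive front t (dX t)) /\
    filterlim (fun h => (front h - front 0) / h) (at_right 0) (locally (dX 0)) /\
    (forall t, 0 < t -> continuous dX t) /\
    filterlim dX (at_right 0) (locally (dX 0)).
Proof.
  exists dfront.
  split; [intros t Ht; apply front_derive; lra |].
  split; [apply is_derive_right_quotient, front_derive, Rle_refl |].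
  split; [intros t Ht; apply dfront_continuous; lra |].
  apply continuous_at_right, dfront_continuous, Rle_refl.
Qed.

End TravellingFront.

Theorem lemma3p4 (r1 r2 r3 L cA c eta S Rr gamma : R) (phi : R -> R)
  (hr1 : 0 < r1) (hr2 : 0 < r2) (hr3 : 0 < r3) (hL : 0 < L)
  (hr2max : Rmax r1 r3 < r2)
  (hcA : 2 * sqrt r1 < cA)
  (hc : 2 * sqrt r1 < c < cA)
  (heta : 0 < eta) (hS : 0 < S) (hR : 1 < Rr) (hgamma : 0 < gamma)
  (hphi : principal_dirichlet_eigenfunction L Rr (mgrowth r1 r2 r3) phi) :
  exists (x0 : R) (X : R -> R),
    (forall t, 0 <= t ->
       Pfun r1 c S eta x0 t (X t) = Qfun r1 c cA gamma L phi t (X t) /\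
       (* isolated solution *)
       (exists delta, 0 < delta /\ forall x, 0 < Rabs (x - X t) < delta ->
          Pfun r1 c S eta x0 t x <> Qfun r1 c cA gamma L phi t x) /\
       (* (a) *)
       (exists dP, is_derive (fun x => Pfun r1 c S eta x0 t x) (X t) dP /\ dP < 0) /\
       (* (b) *)
       (exists dQ, is_derive (fun x => Qfun r1 c cA gamma L phi t x) (X t) dQ /\ 0 < dQ) /\
       (* (c) *)
       cA * t - Rr * L < X t < cA * t) /\
    (* (d) *)
    Rbar_lt (Finite (ln S / eta))
      (Glb_Rbar (fun y => exists t, 0 <= t /\ y = X t - c * t - x0)) /\
    (* (e) X in C^1([0,+oo), (-RL,+oo)) *)
    (forall t, 0 <= t -> - (Rr * L) < X t) /\
    (exists X' : R -> R,
       (forall t, 0 < t -> is_derive X t (X' t)) /\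
       filterlim (fun h => (X h - X 0) / h) (at_right 0) (locally (X' 0)) /\
       (forall t, 0 < t -> continuous X' t) /\
       filterlim X' (at_right 0) (locally (X' 0))) /\
    (* (f) X(t) = cA t + O(1) as t -> +oo *)
    (exists M T, forall t, T <= t -> Rabs (X t - cA * t) <= M).
Proof.
  pose proof (sqrt_pos r1).
  assert (l_pos : 0 < lam r1 c) by (apply lam_pos; lra).
  assert (cA_pos : 0 < cA) by lra.
  destruct (principal_eigenfunction_left_slope L Rr r1 r2 r3 (cA * L / 2) phi hL ltac:(lra) hphi)
    as [dphi [yb [m0 [phi_left [phi_cont [phi_derive [dphi_cont [phi_pos
       [yb_range [m0_pos phi_slope]]]]]]]]]].
  edestruct (balance_window r1 c cA L gamma eta S phi dphi Rr yb m0)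
    as [x0 [a [a_range [dbalance_pos [balance_a [balance_b [far_slope lnS_lt]]]]]]];
    try eassumption; try lra.
  destruct (increasing_inverse (balance r1 c cA L gamma eta phi x0)
              (dbalance r1 c cA L gamma eta phi dphi x0) a (yb * L)) as [g g_spec];
    try easy; try lra.
  { intros z Hz. apply balance_derive. eapply psi_derive_in; eauto; nra. }
  assert (front_offset : forall t, 0 <= t -> a < front c cA eta S g t - cA * t < yb * L)
    by (intros t Ht; eapply front_offset; eauto; lra).
  assert (yb * L < 0) by nra.
  exists x0, (front c cA eta S g).
  split; [| split; [| split; [| split]]].
  - intros t Ht. pose proof (front_offset t Ht). repeat split; try lra.
    + eapply front_solves; eauto; lra.
    + eapply front_isolated with (m0 := m0); eauto; lra.
    + eapply front_Pfun_slope; eauto; lra.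
    + eapply front_Qfun_slope with (m0 := m0); eauto; lra.
  - eapply front_glb; eauto; lra.
  - intros t Ht. pose proof (front_offset t Ht). nra.
  - eapply front_C1 with (L := L) (a := a); eauto; lra.
  - exists (Rr * L), 0. intros t Ht. pose proof (front_offset t Ht). apply Rabs_le. nra.
Qed.
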